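(* The Bass stable rank of the ring $s'(\mathbb{Z}^d)$ (for any $d\ge1$) is $1$.
   Context: For $\mathbf{n}\in\mathbb{Z}^d$, $\|\mathbf{n}\|_1$ denotes the $1$-norm. $s'(\mathbb{Z}^d)$ is the set of all maps $\mathbf{a}:\mathbb{Z}^d\to\mathbb{C}$ for which there exist $M>0$ and $k\in\mathbb{N}$ with $|\mathbf{a}(\mathbf{n})|\le M(1+\|\mathbf{n}\|_1)^k$ for all $\mathbf{n}\in\mathbb{Z}^d$; it is a commutative unital ring under pointwise operations, with unit the constant function $1$. For a commutative unital ring $R$ with $1\neq 0$: an $N$-tuple $(a_1,\dots,a_N)\in R^N$ is invertible (unimodular) if there is $(b_1,\dots,b_N)\in R^N$ with $b_1a_1+\cdots+b_Na_N=1$; $U_N(R)$ denotes the set of such tuples. An $(N+1)$-tuple $(a_1,\dots,a_N,\alpha)\in U_{N+1}(R)$ is reducible if there exist $h_1,\dots,h_N\in R$ with $(a_1+h_1\alpha,\dots,a_N+h_N\alpha)\in U_N(R)$. The Bass stable rank of $R$ is the smallest integer $N\ge1$ such that every element of $U_{N+1}(R)$ is reducible (and $\infty$ if no such $N$ exists). *)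

From HB Require Import structures.
From mathcomp Require Import all_boot all_order all_algebra.
From mathcomp Require Import complex.
From mathcomp Require Import Rstruct.
Set Implicit Arguments. Unset Strict Implicit. Unset Printing Implicit Defensive.
Import Order.TTheory GRing.Theory Num.Theory.
Local Open Scope ring_scope.

Definition CC : Type := (Rdefinitions.R)[i].

Definition Zd (d : nat) : Type := 'rV[int]_d.

Definition norm1 (d : nat) (n : Zd d) : nat := (\sum_(i < d) `|n ord0 i|)%N.

Definition seqfun (d : nat) : Type := Zd d -> CC.

Definition in_sprime (d : nat) (a : seqfun d) : Prop :=
  exists (M : Rdefinitions.R) (k : nat), 0 < M /\
    forall n : Zd d, ComplexField.Normc.normc (a n) <= M * (1 + (norm1 n)%:R) ^+ k.

Definition sadd d (a b : seqfun d) : seqfun d := fun n => a n + b n.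
Definition smul d (a b : seqfun d) : seqfun d := fun n => a n * b n.
Definition sone d : seqfun d := fun _ => 1.

Definition seq_eq d (a b : seqfun d) : Prop := forall n, a n = b n.

Definition unimodular (d N : nat) (a : 'I_N -> seqfun d) : Prop :=
  (forall i, in_sprime (a i)) /\
  exists b : 'I_N -> seqfun d,
    (forall i, in_sprime (b i)) /\
    seq_eq (fun n => \sum_(i < N) smul (b i) (a i) n) (@sone d).

Definition extend (d N : nat) (a : 'I_N -> seqfun d) (alpha : seqfun d)
  : 'I_N.+1 -> seqfun d :=
  fun i => if unlift ord_max i is Some j then a j else alpha.

Definition reducible (d N : nat) (a : 'I_N -> seqfun d) (alpha : seqfun d) : Prop :=
  exists h : 'I_N -> seqfun d,
    (forall i, in_sprime (h i)) /\
    unimodular (fun i => sadd (a i) (smul (h i) alpha)).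

Definition every_reducible (d N : nat) : Prop :=
  forall (a : 'I_N -> seqfun d) (alpha : seqfun d),
    unimodular (extend a alpha) -> reducible a alpha.

Definition bass_stable_rank_eq (d N : nat) : Prop :=
  (1 <= N)%N /\ every_reducible d N /\
  forall M : nat, (1 <= M)%N -> every_reducible d M -> (N <= M)%N.

From mathcomp Require Import all_boot all_order all_algebra.
From mathcomp Require Import complex Rstruct lra.
Set Implicit Arguments. Unset Strict Implicit. Unset Printing Implicit Defensive.
Import Order.TTheory GRing.Theory Num.Theory ComplexField.Normc.
Local Open Scope ring_scope.

(** From a Bezout identity [b0 a + b1 alpha = 1] with [|b0|, |b1| <= P]
    polynomially bounded we get [|a| + |alpha| >= 1/P].  Choosing pointwise
    [h = 0] where [|alpha| <= 2|a|] and [h = 1] elsewhere keeps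
    [|a + h alpha|] above [(|a| + |alpha|)/3], hence above [1/(3P)], so
    [a + h alpha] is a unit of s'(Z^d): its inverse again has polynomial
    growth. *)

Section ComplexNorm.
Variable R : rcfType.
Implicit Types x y b c : R[i].

Lemma normc_ge0 x : 0 <= normc x.
Proof. by case: x => u v /=; rewrite sqrtr_ge0. Qed.

Lemma normcD_choose x y :
  normc x + normc y <= 3 * normc (x + (if normc y <= 2 * normc x then 0 else 1) * y).
Proof.
have x0 := normc_ge0 x; have y0 := normc_ge0 y.
case: ifP => [le_yx | /negbT]; first by rewrite mul0r addr0; lra.
rewrite -ltNge mul1r => lt_xy.
have : normc y <= normc (x + y) + normc x.
  by have := le_normcD (x + y) (- x); rewrite normcN addrAC subrr add0r.
lra.
Qed.

Lemma bezout_normc_lower_bound x y b c (C : R) :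
  b * x + c * y = 1 -> normc b <= C -> normc c <= C ->
  1 <= C * (normc x + normc y).
Proof.
move=> bezout bC cC.
have := le_normcD (b * x) (c * y); rewrite bezout normc1 !normcM => le1.
apply: (le_trans le1); rewrite mulrDr.
by apply: lerD; apply: ler_wpM2r => //; apply: normc_ge0.
Qed.

End ComplexNorm.

Notation RR := Rdefinitions.R.

Definition weight d (n : Zd d) : RR := 1 + (norm1 n)%:R.

Lemma weight_ge1 d (n : Zd d) : 1 <= weight n.
Proof. by rewrite /weight lerDl ler0n. Qed.

Lemma weight_expn_ge0 d (n : Zd d) k : 0 <= weight n ^+ k.
Proof. by rewrite exprn_ge0 // (le_trans ler01 (weight_ge1 n)). Qed.

Lemma weight_expn_le d (n : Zd d) k1 k2 :
  (k1 <= k2)%N -> weight n ^+ k1 <= weight n ^+ k2.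
Proof. exact/ler_weXn2l/weight_ge1. Qed.

Lemma weight_bound_le d (n : Zd d) (z : CC) (M M' : RR) k k' :
  0 <= M -> M <= M' -> (k <= k')%N ->
  normc z <= M * weight n ^+ k -> normc z <= M' * weight n ^+ k'.
Proof.
move=> M0 MM' kk' zM; apply: (le_trans zM).
by apply: ler_pM; rewrite ?weight_expn_ge0 ?weight_expn_le.
Qed.

Section SPrime.
Variable d : nat.
Implicit Types a b u : seqfun d.

Lemma in_sprime_bound a (M : RR) k :
  (forall n, normc (a n) <= M * weight n ^+ k) -> in_sprime a.
Proof.
move=> aM; exists (`|M| + 1), k; split=> [|n]; first by rewrite ltr_pwDr.
apply: (le_trans (aM n)); apply: ler_wpM2r; first exact: weight_expn_ge0.
by rewrite ler_wpDr ?ler_norm.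
Qed.

Lemma in_sprime_common_bound a b : in_sprime a -> in_sprime b ->
  exists M k, 0 <= M /\
    forall n, normc (a n) <= M * weight n ^+ k /\ normc (b n) <= M * weight n ^+ k.
Proof.
move=> [Ma [ka [/ltW Ma0 aM]]] [Mb [kb [/ltW Mb0 bM]]].
exists (Ma + Mb), (ka + kb)%N; split=> [|n]; first exact: addr_ge0.
split; [apply: (weight_bound_le _ _ _ (aM n)) | apply: (weight_bound_le _ _ _ (bM n))].
all: by rewrite ?lerDl ?lerDr ?leq_addr ?leq_addl.
Qed.

Lemma in_sprime_add a b : in_sprime a -> in_sprime b -> in_sprime (sadd a b).
Proof.
move=> sa sb; have [M [k [_ abM]]] := in_sprime_common_bound sa sb.
apply: (@in_sprime_bound _ (M + M) k) => n; rewrite mulrDl.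
by apply: (le_trans (le_normcD _ _)); apply: lerD; apply abM.
Qed.

Lemma in_sprime_mul a b : in_sprime a -> in_sprime b -> in_sprime (smul a b).
Proof.
move=> sa sb; have [M [k [M0 abM]]] := in_sprime_common_bound sa sb.
apply: (@in_sprime_bound _ (M * M) (k + k)) => n.
rewrite /smul normcM exprD mulrACA.
by have [aM bM] := abM n; apply: ler_pM; rewrite ?normc_ge0.
Qed.

Lemma in_sprime_inv u (M : RR) k :
  (forall n, 1 <= M * weight n ^+ k * normc (u n)) ->
  in_sprime (fun n => (u n)^-1).
Proof.
move=> uM; apply: (@in_sprime_bound _ M k) => n; rewrite normcV.
have u0 : 0 < normc (u n).
  rewrite lt_def normc_ge0 andbT; apply: contraTneq (uM n) => ->.
  by rewrite mulr0 ler10.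
by rewrite -[_^-1]mul1r ler_pdivrMr.
Qed.

End SPrime.

Section UnimodularTuples.
Variable d : nat.

Lemma extend_lift N (a : 'I_N -> seqfun d) alpha i :
  extend a alpha (lift ord_max i) = a i.
Proof. by rewrite /extend liftK. Qed.

Lemma extend_max N (a : 'I_N -> seqfun d) alpha : extend a alpha ord_max = alpha.
Proof. by rewrite /extend unlift_none. Qed.

Lemma unimodular_extend1P (a : 'I_1 -> seqfun d) alpha :
  unimodular (extend a alpha) ->
  [/\ in_sprime (a ord0), in_sprime alpha &
    exists b0 b1, [/\ in_sprime b0, in_sprime b1 &
      forall n, b0 n * a ord0 n + b1 n * alpha n = 1]].
Proof.
have lift0 : lift ord_max ord0 = ord0 :> 'I_2 by apply: val_inj.
move=> [sa [b [sb bezout]]]; split.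
- by rewrite -(extend_lift a alpha) lift0.
- by rewrite -(extend_max a alpha).
exists (b ord0), (b ord_max); split=> // n.
have := bezout n; rewrite big_ord_recl big_ord1 /smul /sone.
have -> : lift ord0 ord0 = ord_max :> 'I_2 by apply: val_inj.
by rewrite extend_max -lift0 extend_lift.
Qed.

Lemma unimodular1 (v : 'I_1 -> seqfun d) :
  (forall n, v ord0 n != 0) -> in_sprime (v ord0) ->
  in_sprime (fun n => (v ord0 n)^-1) -> unimodular v.
Proof.
move=> v0 sv svV; split=> [i|]; first by rewrite (ord1 i).
exists (fun _ n => (v ord0 n)^-1); split=> // n.
by rewrite big_ord1 /smul mulVf.
Qed.

End UnimodularTuples.

Lemma every_reducible1 d : every_reducible d 1.
Proof.
move=> a alpha /unimodular_extend1P [sa salpha [b0 [b1 [sb0 sb1 bezout]]]].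
pose h : seqfun d :=
  fun n => if normc (alpha n) <= 2 * normc (a ord0 n) then 0 else 1.
have sh : in_sprime h.
  apply: (@in_sprime_bound _ _ 1 0) => n; rewrite /h expr0 mulr1.
  by case: ifP; rewrite ?normc0 ?normc1.
pose u : seqfun d := sadd (a ord0) (smul h alpha).
have [M [k [M0 bM]]] := in_sprime_common_bound sb0 sb1.
have u_lower n : 1 <= 3 * M * weight n ^+ k * normc (u n).
  have [b0M b1M] := bM n.
  have := bezout_normc_lower_bound (bezout n) b0M b1M.
  have := normcD_choose (a ord0 n) (alpha n).
  have := mulr_ge0 M0 (weight_expn_ge0 n k).
  rewrite /u /sadd /smul /h; nra.
exists (fun _ => h); split=> //; apply: unimodular1.
- move=> n; apply: contraTneq (u_lower n) => /= u0.
  by rewrite /u u0 normc0 mulr0 ler10.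
- exact/in_sprime_add/in_sprime_mul.
- exact: in_sprime_inv u_lower.
Qed.

Theorem theorem1p4 (d : nat) : (1 <= d)%N -> bass_stable_rank_eq d 1.
Proof. by move=> _; split; last split; [| exact: every_reducible1 |]. Qed.
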